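(* Let $0<\lambda<1$ and $0<p<1$. Let \[ f(z)=\frac{z}{1-\frac{z}{p}+\lambda z\int_z^p\omega(t)\,dt}, \] where $\omega$ is analytic in $\mathbb{D}=\{z:|z|<1\}$ with $|\omega(z)|\le1$ on $\mathbb{D}$, so that $f\in\mathcal{U}_m(\lambda)$ has a simple pole at $z=p$, and let $f(z)=\sum_{k=-1}^\infty b_k(z-p)^k$ be the Laurent series of $f$ at $z=p$. Then, as $\omega$ ranges over all such functions, the region of variability of the residue $b_{-1}$ is the disk \[ \left\{\frac{-p^2}{1+\lambda p^2u}:\ u\in\overline{\mathbb{D}}\right\}, \] and \[ \frac{p^2}{1+\lambda p^2}\le |b_{-1}|\le \frac{p^2}{1-\lambda p^2}, \] where the upper bound is sharp, with equality attained when $\omega(z)\equiv -1$.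
   Context: For $\lambda\in(0,1)$ and $p\in(0,1)$, $\mathcal{U}_m(\lambda)$ denotes the family of functions $f$ meromorphic in $\mathbb{D}$ with a pole at $z=p$, having a Taylor expansion $f(z)=z+\sum_{k=2}^\infty a_k z^k$ for $|z|<p$, and satisfying $\left|\frac{z}{f(z)}-z\left(\frac{z}{f(z)}\right)'-1\right|<\lambda$ for every $z\in\mathbb{D}$. The integral is along any path in $\mathbb{D}$ from $z$ to $p$. *)

From Stdlib Require Import Reals.
From Coquelicot Require Import Coquelicot.
Open Scope C_scope.

Definition in_unit_disk (z : C) : Prop := (Cmod z < 1)%R.

Definition analytic_on_disk (w : C -> C) : Prop :=
  forall z : C, in_unit_disk z -> ex_derive (K := C_AbsRing) (V := C_NormedModule) w z.

Definition admissible (w : C -> C) : Prop :=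
  analytic_on_disk w /\ forall z : C, in_unit_disk z -> (Cmod (w z) <= 1)%R.

(* Integral of w from z to p along the straight segment [z, p]
   (which lies in the convex disk; the integral is path independent there):
   int_z^p w(t) dt = (p - z) * int_0^1 w(z + s (p - z)) ds. *)
Definition seg_int (w : C -> C) (z p : C) : C :=
  (p - z) * RInt (V := C_R_CompleteNormedModule)
              (fun s : R => w (z + RtoC s * (p - z))) 0 1.

Definition f_fun (lam p : R) (w : C -> C) (z : C) : C :=
  z / (1 - z / RtoC p + RtoC lam * z * seg_int w z (RtoC p)).

(* b is the coefficient b_{-1} of the Laurent expansion of f at the (simple)
   pole a: near a (a excluded), f z = b / (z - a) + g z with g holomorphic
   in a neighbourhood of a (g = sum_{k>=0} b_k (z-a)^k). *)
Definition laurent_residue (f : C -> C) (a b : C) : Prop :=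
  exists r : R, (0 < r)%R /\
    exists g : C -> C,
      (forall z, (Cmod (z - a) < r)%R -> ex_derive (K := C_AbsRing) (V := C_NormedModule) g z) /\
      (forall z, (0 < Cmod (z - a) < r)%R -> f z = b / (z - a) + g z).

(* Write the denominator of f as (z - p) E(z) with
     E(z) = -1/p - lam z J(z),   J(z) = int_0^1 w(z + s (p - z)) ds,
   the average of w over the segment [z, p].  J is continuous at p with J(p) = w(p), so E(p) =
   -(1 + lam p^2 w(p)) / p, which is nonzero because |lam p^2 w(p)| < 1.  Hence f has a simple
   pole at p with residue p / E(p) = -p^2 / (1 + lam p^2 w(p)), and every value with |w(p)| <= 1
   is attained by a constant w.  The bounds on |b_{-1}| are the triangle inequality
   1 - lam p^2 <= |1 + lam p^2 u| <= 1 + lam p^2, with equality on the left for u = -1. *)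

From Stdlib Require Import Reals Lra.
From Coquelicot Require Import Coquelicot.
Open Scope C_scope.

(* Coquelicot's canonical uniform structure on [C] is the product one; continuity with respect to
   the [Cmod]-balls of [C_AbsRing] is the one that matches [ex_derive] and the product rules. *)
Notation Ccontinuous :=
  (@continuous (AbsRing_UniformSpace C_AbsRing) (AbsRing_UniformSpace C_AbsRing)).

Lemma Ccontinuous_Cmod (h : C -> C) (a : C) :
  Ccontinuous h a <->
  forall eps : R, (0 < eps)%R -> exists d : R, (0 < d)%R /\
    forall z, (Cmod (z - a) < d)%R -> (Cmod (h z - h a) < eps)%R.
Proof.
  split.
  - intros Hh eps Heps.
    destruct (proj1 (filterlim_locally_ball_norm (U := AbsRing_NormedModule C_AbsRing) h (h a)) Hh
                (mkposreal eps Heps)) as [d Hd].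
    exists d. split; [apply cond_pos | exact Hd].
  - intros Hh. apply (filterlim_locally_ball_norm (U := AbsRing_NormedModule C_AbsRing)).
    intros eps. destruct (Hh eps (cond_pos eps)) as [d [Hd Hz]].
    exists (mkposreal d Hd). exact Hz.
Qed.

Lemma ex_derive_Ccontinuous (h : C -> C) (a : C) :
  ex_derive (K := C_AbsRing) (V := C_NormedModule) h a -> Ccontinuous h a.
Proof.
  intros Hh. apply ex_derive_continuous in Hh.
  apply (filterlim_locally_ball_norm (U := AbsRing_NormedModule C_AbsRing)).
  exact (proj1 (filterlim_locally_ball_norm (U := C_NormedModule) h (h a)) Hh).
Qed.

Lemma continuous_C_R_of_C_AbsRing (h : R -> C) (x : R) :
  @continuous R_UniformSpace (AbsRing_UniformSpace C_AbsRing) h x ->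
  @continuous R_UniformSpace C_R_CompleteNormedModule h x.
Proof. intros Hh P HP. apply Hh, locally_C, HP. Qed.

Lemma Ccontinuous_eq0_punctured (h : C -> C) (a : C) (r : R) : (0 < r)%R ->
  Ccontinuous h a -> (forall z, (0 < Cmod (z - a) < r)%R -> h z = 0) -> h a = 0.
Proof.
  intros Hr Hh H0. apply Cmod_eq_0.
  apply Rle_antisym; [|apply Cmod_ge_0].
  apply Rnot_lt_le. intros Hpos.
  destruct (proj1 (Ccontinuous_Cmod h a) Hh _ Hpos) as [d [Hd Hz]].
  set (t := (Rmin d r / 2)%R).
  assert (Ht : (0 < t < Rmin d r)%R) by (unfold t; pose proof (Rmin_glb_lt _ _ _ Hd Hr); lra).
  assert (Hdist : Cmod (a + RtoC t - a) = t).
  { replace (a + RtoC t - a) with (RtoC t) by ring. rewrite Cmod_R. apply Rabs_pos_eq. lra. }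
  pose proof (Rmin_l d r). pose proof (Rmin_r d r).
  specialize (Hz (a + RtoC t) ltac:(lra)).
  rewrite H0 in Hz by lra.
  replace (0 - h a) with (- h a) in Hz by ring. rewrite Cmod_opp in Hz. lra.
Qed.

Lemma Ccontinuous_neq0_near (h : C -> C) (a : C) :
  Ccontinuous h a -> h a <> 0 ->
  exists r : R, (0 < r)%R /\ forall z, (Cmod (z - a) < r)%R -> h z <> 0.
Proof.
  intros Hh Ha.
  destruct (proj1 (Ccontinuous_Cmod h a) Hh (Cmod (h a)) (proj1 (Cmod_gt_0 _) Ha)) as [r [Hr Hz]].
  exists r. split; [exact Hr|]. intros z Hza Hz0.
  specialize (Hz z Hza). rewrite Hz0 in Hz.
  replace (0 - h a) with (- h a) in Hz by ring. rewrite Cmod_opp in Hz. lra.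
Qed.

(* [(b + (z - a) g z) E z - N z] is continuous at [a] and vanishes on a punctured disc. *)
Lemma laurent_residue_quotient (f N E : C -> C) (a b : C) (r : R) :
  laurent_residue f a b -> Ccontinuous N a -> Ccontinuous E a -> E a <> 0 -> (0 < r)%R ->
  (forall z, (0 < Cmod (z - a) < r)%R -> f z = N z / ((z - a) * E z)) ->
  b = N a / E a.
Proof.
  intros [rg [Hrg [g [Hg Hfg]]]] HN HE HEa Hr Hf.
  destruct (Ccontinuous_neq0_near E a HE HEa) as [rE [HrE HE0]].
  assert (Hga : Ccontinuous g a).
  { apply ex_derive_Ccontinuous, Hg. replace (a - a) with (RtoC 0) by ring.
    rewrite Cmod_0. exact Hrg. }
  set (h z := (b + (z - a) * g z) * E z - N z).
  assert (Hh : Ccontinuous h a).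
  { apply (continuous_minus (K := C_AbsRing) (V := AbsRing_NormedModule C_AbsRing)); [|exact HN].
    apply (continuous_mult (K := C_AbsRing)); [|exact HE].
    apply (continuous_plus (V := AbsRing_NormedModule C_AbsRing)); [apply continuous_const|].
    apply (continuous_mult (K := C_AbsRing)); [|exact Hga].
    apply (continuous_minus (V := AbsRing_NormedModule C_AbsRing));
      [apply continuous_id | apply continuous_const]. }
  assert (Hha : h a = 0).
  { apply (Ccontinuous_eq0_punctured h a (Rmin rg (Rmin rE r))); [|exact Hh|].
    { repeat apply Rmin_glb_lt; assumption. }
    intros z [Hz0 Hz].
    pose proof (Rmin_l rg (Rmin rE r)). pose proof (Rmin_r rg (Rmin rE r)).
    pose proof (Rmin_l rE r). pose proof (Rmin_r rE r).
    assert (Hza : z - a <> 0) by (apply Cmod_gt_0; exact Hz0).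
    assert (HEz : E z <> 0) by (apply HE0; lra).
    pose proof (Hfg z ltac:(lra)) as Hl. rewrite Hf in Hl by lra.
    unfold h. replace (N z) with ((b / (z - a) + g z) * ((z - a) * E z))
      by (rewrite <- Hl; field; auto).
    field. exact Hza. }
  assert (HbE : b * E a = N a).
  { apply Ceq_minus. rewrite <- Hha. unfold h. ring. }
  rewrite <- HbE. field. exact HEa.
Qed.

Lemma is_derive_sq_remainder {V : NormedModule C_AbsRing} (f : C -> V) (z0 : C) (l : V)
  (M r : R) : (0 < r)%R ->
  (forall y, (Cmod (y - z0) < r)%R ->
     (norm (minus (minus (f y) (f z0)) (scal (y - z0)%C l)) <= M * Cmod (y - z0) ^ 2)%R) ->
  is_derive f z0 l.
Proof.
  intros Hr Hrem. split; [apply is_linear_scal_l|].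
  intros x Hx. apply (is_filter_lim_locally_unique (V := AbsRing_NormedModule C_AbsRing)) in Hx.
  subst x. intros eps.
  assert (Hd : (0 < Rmin r (eps / (Rabs M + 1)))%R).
  { apply Rmin_glb_lt; [exact Hr|]. apply Rdiv_lt_0_compat; [apply cond_pos|].
    pose proof (Rabs_pos M). lra. }
  exists (mkposreal _ Hd). intros y Hy.
  change (Cmod (y - z0) < Rmin r (eps / (Rabs M + 1)))%R in Hy.
  change (norm (minus (minus (f y) (f z0)) (scal (y - z0)%C l)) <= eps * Cmod (y - z0))%R.
  pose proof (Rmin_l r (eps / (Rabs M + 1))). pose proof (Rmin_r r (eps / (Rabs M + 1))).
  eapply Rle_trans; [apply Hrem; lra|].
  set (t := Cmod (y - z0)) in *.
  assert (Ht : (0 <= t)%R) by apply Cmod_ge_0.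
  assert (HtM : (t * (Rabs M + 1) <= eps)%R).
  { pose proof (Rabs_pos M).
    assert (Hte : (t <= eps / (Rabs M + 1))%R) by lra.
    apply (Rmult_le_compat_r (Rabs M + 1)) in Hte; [|lra].
    unfold Rdiv in Hte. rewrite Rmult_assoc, Rinv_l, Rmult_1_r in Hte by lra. exact Hte. }
  assert (M * t ^ 2 <= Rabs M * t ^ 2)%R
    by (apply Rmult_le_compat_r; [apply pow2_ge_0 | apply Rle_abs]).
  assert (t * (Rabs M + 1) * t <= eps * t)%R by (apply Rmult_le_compat_r; assumption).
  nra.
Qed.

Lemma is_derive_const_div (c z0 : C) : z0 <> 0 ->
  is_derive (K := C_AbsRing) (V := C_NormedModule) (fun y => c / y) z0 (- c / (z0 * z0)).
Proof.
  intros Hz0. set (m := Cmod z0).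
  assert (Hm : (0 < m)%R) by (apply Cmod_gt_0; exact Hz0).
  apply (is_derive_sq_remainder _ _ _ (2 * Cmod c / m ^ 3) (m / 2)); [lra|].
  intros y Hy.
  change (Cmod (c / y - c / z0 - (y - z0) * (- c / (z0 * z0)))
            <= 2 * Cmod c / m ^ 3 * Cmod (y - z0) ^ 2)%R.
  assert (Hym : (m / 2 < Cmod y)%R).
  { pose proof (Cmod_triangle (z0 - y) y) as T.
    replace (z0 - y + y) with z0 in T by ring.
    replace (z0 - y) with (- (y - z0)) in T by ring. rewrite Cmod_opp in T. fold m in T. lra. }
  assert (Hy0 : y <> 0) by (apply Cmod_gt_0; lra).
  replace (c / y - c / z0 - (y - z0) * (- c / (z0 * z0)))
    with (c * ((y - z0) ^ 2 / (y * z0 ^ 2))) by (field; auto).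
  rewrite Cmod_mult, Cmod_div by (apply Cmult_neq_0; [exact Hy0 | apply Cpow_nz; exact Hz0]).
  rewrite Cmod_mult, !Cmod_pow. fold m.
  replace (2 * Cmod c / m ^ 3 * Cmod (y - z0) ^ 2)%R
    with (Cmod c * (Cmod (y - z0) ^ 2 / (m / 2 * m ^ 2)))%R by (field; lra).
  apply Rmult_le_compat_l; [apply Cmod_ge_0|].
  unfold Rdiv. apply Rmult_le_compat_l; [apply pow2_ge_0|].
  assert (0 < m ^ 2)%R by (apply pow_lt; exact Hm).
  apply Rinv_le_contravar; [apply Rmult_lt_0_compat; lra|].
  apply Rmult_le_compat_r; lra.
Qed.

Lemma ex_derive_div_affine (c al be z : C) : al + be * z <> 0 ->
  ex_derive (K := C_AbsRing) (V := C_NormedModule) (fun z => c / (al + be * z)) z.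
Proof.
  intros Hz. eexists.
  apply (is_derive_comp (K := C_AbsRing) (V := C_NormedModule) (fun y => c / y)
           (fun z => al + be * z) z (- c / ((al + be * z) * (al + be * z))) be).
  - apply is_derive_const_div, Hz.
  - apply (is_derive_sq_remainder _ _ _ 0 1); [lra|]. intros y _.
    change (Cmod (al + be * y - (al + be * z) - (y - z) * be) <= 0 * Cmod (y - z) ^ 2)%R.
    replace (al + be * y - (al + be * z) - (y - z) * be) with (RtoC 0) by ring.
    rewrite Cmod_0. nra.
Qed.

Lemma Cmod_RtoC_mult (s : R) (c : C) : Cmod (RtoC s * c) = (Rabs s * Cmod c)%R.
Proof. rewrite Cmod_mult, Cmod_R. reflexivity. Qed.

Lemma Cmod_one_plus_ge (x : C) : (1 - Cmod x <= Cmod (1 + x))%R.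
Proof.
  pose proof (Cmod_triangle (1 + x) (- x)) as T.
  replace (1 + x + - x) with (RtoC 1) in T by ring. rewrite Cmod_opp, Cmod_1 in T. lra.
Qed.

Lemma one_plus_neq0 (x : C) : (Cmod x < 1)%R -> 1 + x <> 0.
Proof. intros Hx. apply Cmod_gt_0. pose proof (Cmod_one_plus_ge x). lra. Qed.

Lemma Cmod_one_plus_scal_bounds (c : R) (u : C) : (0 <= c)%R -> (Cmod u <= 1)%R ->
  (1 - c <= Cmod (1 + RtoC c * u) <= 1 + c)%R.
Proof.
  intros Hc Hu.
  assert (Hcu : (Cmod (RtoC c * u) <= c)%R).
  { rewrite Cmod_RtoC_mult, Rabs_pos_eq by exact Hc. nra. }
  split.
  - pose proof (Cmod_one_plus_ge (RtoC c * u)). lra.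
  - eapply Rle_trans; [apply Cmod_triangle|]. rewrite Cmod_1. lra.
Qed.

Definition seg_avg (w : C -> C) (z a : C) : C :=
  RInt (V := C_R_CompleteNormedModule) (fun s : R => w (z + RtoC s * (a - z))) 0 1.

Lemma segment_in_disk (z a : C) (s : R) : (Cmod z < 1)%R -> (Cmod a < 1)%R -> (0 <= s <= 1)%R ->
  (Cmod (z + RtoC s * (a - z)) < 1)%R.
Proof.
  intros Hz Ha Hs.
  replace (z + RtoC s * (a - z)) with (RtoC (1 - s) * z + RtoC s * a)
    by (rewrite RtoC_minus; ring).
  eapply Rle_lt_trans; [apply Cmod_triangle|].
  rewrite !Cmod_RtoC_mult, !Rabs_pos_eq by lra.
  assert ((1 - s) * Cmod z <= (1 - s) * Rmax (Cmod z) (Cmod a))%R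
    by (apply Rmult_le_compat_l; [lra | apply Rmax_l]).
  assert (s * Cmod a <= s * Rmax (Cmod z) (Cmod a))%R
    by (apply Rmult_le_compat_l; [lra | apply Rmax_r]).
  assert (Rmax (Cmod z) (Cmod a) < 1)%R by (apply Rmax_lub_lt; assumption).
  lra.
Qed.

Lemma segment_dist (z a : C) (s : R) : (0 <= s <= 1)%R ->
  (Cmod (z + RtoC s * (a - z) - a) <= Cmod (z - a))%R.
Proof.
  intros Hs.
  replace (z + RtoC s * (a - z) - a) with (RtoC (1 - s) * (z - a))
    by (rewrite RtoC_minus; ring).
  rewrite Cmod_RtoC_mult, Rabs_pos_eq by lra.
  pose proof (Cmod_ge_0 (z - a)). nra.
Qed.

Lemma segment_continuous (z a : C) (s : R) :
  @continuous R_UniformSpace (AbsRing_UniformSpace C_AbsRing)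
    (fun s : R => z + RtoC s * (a - z)) s.
Proof.
  apply (filterlim_locally_ball_norm (U := AbsRing_NormedModule C_AbsRing)). intros eps.
  pose proof (Cmod_ge_0 (a - z)).
  assert (Hd : (0 < eps / (Cmod (a - z) + 1))%R)
    by (apply Rdiv_lt_0_compat; [apply cond_pos | lra]).
  exists (mkposreal _ Hd). intros s' Hs'.
  change (Rabs (s' - s) < eps / (Cmod (a - z) + 1))%R in Hs'.
  change (Cmod (z + RtoC s' * (a - z) - (z + RtoC s * (a - z))) < eps)%R.
  replace (z + RtoC s' * (a - z) - (z + RtoC s * (a - z))) with (RtoC (s' - s) * (a - z))
    by (rewrite RtoC_minus; ring).
  rewrite Cmod_RtoC_mult.
  apply Rmult_lt_compat_r with (r := (Cmod (a - z) + 1)%R) in Hs'; [|lra].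
  unfold Rdiv in Hs'. rewrite Rmult_assoc, Rinv_l, Rmult_1_r in Hs' by lra.
  pose proof (Rabs_pos (s' - s)). nra.
Qed.

Lemma RInt_const_01 (c : C) : RInt (V := C_R_CompleteNormedModule) (fun _ => c) 0 1 = c.
Proof. rewrite RInt_const, Rminus_0_r. exact (scal_one (V := C_R_NormedModule) c). Qed.

Section SegmentAverage.

Variable w : C -> C.
Hypothesis w_cont : forall t, (Cmod t < 1)%R -> Ccontinuous w t.

Lemma ex_RInt_segment (z a : C) : (Cmod z < 1)%R -> (Cmod a < 1)%R ->
  ex_RInt (V := C_R_CompleteNormedModule) (fun s : R => w (z + RtoC s * (a - z))) 0 1.
Proof.
  intros Hz Ha. apply ex_RInt_continuous. intros s Hs.
  rewrite Rmin_left, Rmax_right in Hs by lra.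
  apply continuous_C_R_of_C_AbsRing.
  apply (continuous_comp (V := AbsRing_UniformSpace C_AbsRing));
    [apply segment_continuous | apply w_cont, segment_in_disk; assumption].
Qed.

Lemma seg_avg_self (a : C) : seg_avg w a a = w a.
Proof.
  unfold seg_avg. rewrite (RInt_ext (V := C_R_CompleteNormedModule) _ (fun _ => w a)).
  - apply RInt_const_01.
  - intros s _. f_equal. ring.
Qed.

Lemma seg_avg_continuous (a : C) : (Cmod a < 1)%R -> Ccontinuous (fun z => seg_avg w z a) a.
Proof.
  intros Ha. apply Ccontinuous_Cmod. intros eps Heps.
  destruct (proj1 (Ccontinuous_Cmod w a) (w_cont a Ha) (eps / 2)%R ltac:(lra)) as [d [Hd Hwa]].
  exists (Rmin d (1 - Cmod a)). split; [apply Rmin_glb_lt; lra|].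
  intros z Hza. pose proof (Rmin_l d (1 - Cmod a)). pose proof (Rmin_r d (1 - Cmod a)).
  assert (Hz : (Cmod z < 1)%R).
  { pose proof (Cmod_triangle (z - a) a) as T. replace (z - a + a) with z in T by ring. lra. }
  rewrite seg_avg_self. unfold seg_avg.
  rewrite <- (RInt_const_01 (w a)).
  pose proof (is_RInt_minus _ _ 0 1 _ _
    (RInt_correct _ _ _ (ex_RInt_segment z a Hz Ha))
    (RInt_correct _ _ _ (ex_RInt_const (V := C_R_CompleteNormedModule) 0 1 (w a)))) as HI.
  rewrite Cmod_norm.
  apply Rle_lt_trans with ((1 - 0) * (eps / 2))%R; [|lra].
  apply (norm_RInt_le_const _ 0 1 _ _ ltac:(lra)) with (2 := HI).
  intros s Hs. rewrite <- Cmod_norm. apply Rlt_le, Hwa.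
  eapply Rle_lt_trans; [apply segment_dist; exact Hs | lra].
Qed.

End SegmentAverage.

Lemma f_fun_factor (lam p : R) (w : C -> C) (z : C) : p <> 0%R ->
  f_fun lam p w z = z / ((z - RtoC p) * (- / RtoC p - RtoC lam * z * seg_avg w z (RtoC p))).
Proof.
  intros Hp. unfold f_fun, seg_int. fold (seg_avg w z (RtoC p)).
  f_equal. field. intros E. apply Hp. exact (f_equal fst E).
Qed.

Section Residue.

Variables lam p : R.
Hypothesis Hlam : (0 < lam < 1)%R.
Hypothesis Hp : (0 < p < 1)%R.

Let p_in_disk : (Cmod (RtoC p) < 1)%R.
Proof. rewrite Cmod_R, Rabs_pos_eq; lra. Qed.

Let RtoC_p_neq0 : RtoC p <> 0.
Proof. intros E. apply (f_equal fst) in E. simpl in E. lra. Qed.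

Let residue_den_neq0 (u : C) : (Cmod u <= 1)%R -> 1 + RtoC (lam * p ^ 2) * u <> 0.
Proof.
  intros Hu. apply Cmod_gt_0.
  pose proof (Cmod_one_plus_scal_bounds (lam * p ^ 2) u ltac:(nra) Hu). nra.
Qed.

Lemma laurent_residue_f_fun (w : C -> C) (b : C) :
  admissible w -> laurent_residue (f_fun lam p w) (RtoC p) b ->
  b = - RtoC (p ^ 2) / (1 + RtoC (lam * p ^ 2) * w (RtoC p)).
Proof.
  intros [Hw Hwb] Hres.
  assert (Hwc : forall t, (Cmod t < 1)%R -> Ccontinuous w t)
    by (intros t Ht; apply ex_derive_Ccontinuous, Hw, Ht).
  set (E z := - / RtoC p - RtoC lam * z * seg_avg w z (RtoC p)).
  assert (HE : Ccontinuous E (RtoC p)).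
  { apply (continuous_minus (V := AbsRing_NormedModule C_AbsRing)); [apply continuous_const|].
    apply (continuous_mult (K := C_AbsRing)); [|apply seg_avg_continuous; assumption].
    apply (continuous_mult (K := C_AbsRing)); [apply continuous_const | apply continuous_id]. }
  assert (HEp : E (RtoC p) = - (1 + RtoC (lam * p ^ 2) * w (RtoC p)) / RtoC p).
  { unfold E. rewrite seg_avg_self. rewrite RtoC_mult, RtoC_pow. field. exact RtoC_p_neq0. }
  assert (HEp0 : E (RtoC p) <> 0).
  { intros H0. apply (residue_den_neq0 (w (RtoC p)) (Hwb _ p_in_disk)).
    replace (1 + RtoC (lam * p ^ 2) * w (RtoC p)) with (- E (RtoC p) * RtoC p)
      by (rewrite HEp; field; exact RtoC_p_neq0).
    rewrite H0. ring. }
  rewrite (laurent_residue_quotient (f_fun lam p w) (fun z => z) E (RtoC p) b 1 Hres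
             (continuous_id _) HE HEp0 Rlt_0_1)
    by (intros z _; apply f_fun_factor; lra).
  rewrite HEp, RtoC_pow. field.
  split; [apply residue_den_neq0, Hwb, p_in_disk | exact RtoC_p_neq0].
Qed.

Lemma laurent_residue_f_fun_const (u : C) : (Cmod u <= 1)%R ->
  laurent_residue (f_fun lam p (fun _ => u)) (RtoC p)
    (- RtoC (p ^ 2) / (1 + RtoC (lam * p ^ 2) * u)).
Proof.
  intros Hu. set (k := RtoC lam * RtoC p * u).
  assert (Hkz : forall z, (Cmod (z - RtoC p) < 1 - p)%R -> 1 + k * z <> 0).
  { intros z Hz. apply one_plus_neq0.
    pose proof (Cmod_triangle (z - RtoC p) (RtoC p)) as T.
    replace (z - RtoC p + RtoC p) with z in T by ring. rewrite Cmod_R, Rabs_pos_eq in T by lra.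
    unfold k. rewrite !Cmod_mult, !Cmod_R, !Rabs_pos_eq by lra.
    pose proof (Cmod_ge_0 u). pose proof (Cmod_ge_0 z).
    assert (Cmod u * Cmod z < 1)%R by nra.
    assert (0 < lam * p < 1)%R by (split; nra).
    nra. }
  assert (Hkp : 1 + k * RtoC p <> 0)
    by (apply Hkz; replace (RtoC p - RtoC p) with (RtoC 0) by ring; rewrite Cmod_0; lra).
  exists (1 - p)%R. split; [lra|].
  exists (fun z => (- RtoC p / (1 + k * RtoC p)) / (1 + k * z)).
  split; [intros z Hz; apply ex_derive_div_affine, Hkz, Hz|].
  intros z [Hz0 Hz].
  assert (Hzp : z - RtoC p <> 0) by (apply Cmod_gt_0; exact Hz0).
  pose proof (Hkz z Hz).
  rewrite f_fun_factor by lra. unfold seg_avg. rewrite RInt_const_01.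
  replace (- / RtoC p - RtoC lam * z * u) with (- (1 + k * z) / RtoC p)
    by (unfold k; field; exact RtoC_p_neq0).
  replace (RtoC (lam * p ^ 2) * u) with (k * RtoC p)
    by (unfold k; rewrite RtoC_mult, RtoC_pow; ring).
  rewrite RtoC_pow. clearbody k. field. repeat split; auto.
Qed.

End Residue.

Lemma admissible_const (u : C) : (Cmod u <= 1)%R -> admissible (fun _ => u).
Proof. intros Hu. split; [intros z _; apply ex_derive_const | intros; exact Hu]. Qed.

Lemma Cmod_residue_value (q c : R) (u : C) : (0 <= q)%R -> (0 <= c < 1)%R -> (Cmod u <= 1)%R ->
  Cmod (- RtoC q / (1 + RtoC c * u)) = (q / Cmod (1 + RtoC c * u))%R.
Proof.
  intros Hq Hc Hu. pose proof (Cmod_one_plus_scal_bounds c u ltac:(lra) Hu).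
  rewrite Cmod_div by (apply Cmod_gt_0; lra).
  rewrite Cmod_opp, Cmod_R, Rabs_pos_eq by exact Hq. reflexivity.
Qed.

Theorem corollary2 (lam p : R) (Hlam : (0 < lam < 1)%R) (Hp : (0 < p < 1)%R) :
  (* region of variability of b_{-1} *)
  (forall b : C,
     (exists w : C -> C, admissible w /\ laurent_residue (f_fun lam p w) (RtoC p) b)
     <-> (exists u : C, (Cmod u <= 1)%R /\
            b = - RtoC (p ^ 2) / (1 + RtoC (lam * p ^ 2) * u)))
  /\
  (* bounds on |b_{-1}| *)
  (forall (w : C -> C) (b : C),
     admissible w -> laurent_residue (f_fun lam p w) (RtoC p) b ->
     (p ^ 2 / (1 + lam * p ^ 2) <= Cmod b <= p ^ 2 / (1 - lam * p ^ 2))%R)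
  /\
  (* sharpness of the upper bound: omega = -1 *)
  (exists b : C,
     laurent_residue (f_fun lam p (fun _ => -1)) (RtoC p) b /\
     Cmod b = (p ^ 2 / (1 - lam * p ^ 2))%R).
Proof.
  assert (Hc : (0 <= lam * p ^ 2 < 1)%R) by (split; nra).
  assert (Hq : (0 <= p ^ 2)%R) by nra.
  assert (Hpd : in_unit_disk (RtoC p)) by (unfold in_unit_disk; rewrite Cmod_R, Rabs_pos_eq; lra).
  assert (Hm1 : (Cmod (-1) <= 1)%R) by (rewrite Cmod_R, Rabs_left; lra).
  split; [|split].
  - intros b. split.
    + intros [w [Hw Hres]]. exists (w (RtoC p)).
      split; [exact (proj2 Hw _ Hpd) | exact (laurent_residue_f_fun lam p Hlam Hp w b Hw Hres)].
    + intros [u [Hu ->]]. exists (fun _ => u).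
      split; [apply admissible_const, Hu | apply laurent_residue_f_fun_const; assumption].
  - intros w b Hw Hres.
    pose proof (proj2 Hw _ Hpd) as Hwp.
    rewrite (laurent_residue_f_fun lam p Hlam Hp w b Hw Hres), Cmod_residue_value by assumption.
    pose proof (Cmod_one_plus_scal_bounds _ _ (proj1 Hc) Hwp).
    split; apply Rmult_le_compat_l, Rinv_le_contravar; lra.
  - eexists. split; [apply laurent_residue_f_fun_const; assumption|].
    rewrite Cmod_residue_value by assumption. f_equal.
    rewrite <- RtoC_mult, <- RtoC_plus, Cmod_R, Rabs_pos_eq; lra.
Qed.
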